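(* Let $m,n$ be positive integers. If $BS(m+1,m)\neq\emptyset$ and $BS(n+1,n)\neq\emptyset$, then $BS(m',m')\neq\emptyset$, where $m'=(2m+1)(2n+1)$.
   Context: For a sequence $\mathbf{s}=(s_0,\dots,s_{l-1})\in\{\pm1\}^l$ and an integer $j\ge 0$, its non-periodic autocorrelation is $N_{\mathbf{s}}(j)=\sum_{i=0}^{l-j-1}s_is_{i+j}$ if $0\le j<l$ and $N_{\mathbf{s}}(j)=0$ otherwise. For positive integers $p,q$, $BS(p,q)$ denotes the set of quadruples $(\mathbf{a},\mathbf{b},\mathbf{c},\mathbf{d})$ of $(\pm1)$-sequences of lengths $p,p,q,q$ respectively (base sequences) such that $N_{\mathbf{a}}(j)+N_{\mathbf{b}}(j)+N_{\mathbf{c}}(j)+N_{\mathbf{d}}(j)=0$ for every integer $j\ge 1$. *)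

From mathcomp Require Import all_boot all_order all_algebra.
Set Implicit Arguments. Unset Strict Implicit. Unset Printing Implicit Defensive.
Import Order.TTheory GRing.Theory Num.Theory.
Local Open Scope ring_scope.

Definition pm1_seq (l : nat) (s : seq int) : Prop :=
  size s = l /\ all (fun x => (x == 1) || (x == -1)) s.

(* Non-periodic autocorrelation N_s(j) = sum_{i=0}^{l-j-1} s_i s_{i+j}
   (the sum is empty, hence 0, when j >= l). *)
Definition naf (s : seq int) (j : nat) : int :=
  \sum_(0 <= i < size s - j) s`_i * s`_(i + j).

Definition is_base_seqs (p q : nat) (a b c d : seq int) : Prop :=
  [/\ pm1_seq p a, pm1_seq p b, pm1_seq q c, pm1_seq q d &
      forall j : nat, (1 <= j)%N -> naf a j + naf b j + naf c j + naf d j = 0].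

Definition BS_nonempty (p q : nat) : Prop :=
  exists a b c d : seq int, is_base_seqs p q a b c d.

From mathcomp Require Import all_boot all_order all_algebra.
From mathcomp Require Import ring zify.
Set Implicit Arguments. Unset Strict Implicit. Unset Printing Implicit Defensive.
Import Order.TTheory GRing.Theory Num.Theory.
Local Open Scope ring_scope.

(* Spread a base sequence (a, b; c, d) of BS(m+1, m) over 2m+1 positions, a and b on
   the even ones and c and d on the odd ones.  With p* the reversal of p, the resulting
   polynomials satisfy A A* + B B* + C C* + D D* = (4m+2) x^(2m), and at every position
   exactly one pair is nonzero, where it is +-1.  Doing the same for BS(n+1, n), composing
   that quadruple with x^(2m+1) and multiplying the two quadruples by a four-square
   (quaternion-type) product gives four polynomials of degree < (2m+1)(2n+1) whose norms
   again add up to a single monomial, so their coefficient sequences have vanishing total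
   aperiodic autocorrelation.  Parity still isolates a single nonzero product in each
   coefficient, which is therefore +-1. *)

Definition pm1 (x : int) : bool := (x == 1) || (x == -1).

Lemma pm1M x y : pm1 x -> pm1 y -> pm1 (x * y).
Proof.
by case/orP => /eqP-> /orP[]/eqP->; rewrite /pm1 ?mulr1 ?mulrN1 ?opprK ?eqxx ?orbT.
Qed.

Lemma pm1N x : pm1 x -> pm1 (- x).
Proof. by case/orP => /eqP ->; rewrite /pm1 ?opprK ?eqxx ?orbT. Qed.

Definition acorr (s : seq int) : {poly int} := Poly s * Poly (rev s).

Lemma naf_eq0 (s : seq int) j : (size s <= j)%N -> naf s j = 0.
Proof. by move=> le_s_j; rewrite /naf big_geq //; lia. Qed.

Lemma naf0 (s : seq int) : all pm1 s -> naf s 0 = (size s)%:R.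
Proof.
move=> /allP s_pm1; rewrite /naf subn0 big_mkord.
rewrite (eq_bigr (fun=> 1)) ?sumr_const ?card_ord // => -[i lt_i_s] _ /=.
rewrite addn0.
by case/orP: (s_pm1 _ (mem_nth 0 lt_i_s)) => /eqP->.
Qed.

Lemma sum_ord_cut (R : nmodType) (F : nat -> R) n n' : (n' <= n)%N ->
  (forall k, (n' <= k < n)%N -> F k = 0) -> \sum_(k < n) F k = \sum_(k < n') F k.
Proof.
move=> le_n'n F0; rewrite -!(big_mkord xpredT) (big_cat_nat (leq0n n') le_n'n) /=.
by rewrite [X in _ + X]big1_seq ?addr0 // => k /andP[_]; rewrite mem_index_iota => /F0.
Qed.

(* [coef_Poly] and [nth_rev] produce [size s] with its type argument a structure
   projection of [int]; [lia] sees it as an atom different from [size s]. *)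
Ltac size_lia s := rewrite -?[size _]/(size s); lia.

Lemma coef_acorr_low (s : seq int) l j : size s = l.+1 -> (j <= l)%N ->
  (acorr s)`_(l - j) = naf s j.
Proof.
move=> sz le_j; rewrite coefM /naf big_mkord sz.
have -> : (l - j).+1 = (l.+1 - j)%N by lia.
apply: eq_bigr => -[i lt_i] _ /=.
rewrite !coef_Poly nth_rev; last by size_lia s.
by congr (_ * s`_ _); size_lia s.
Qed.

Lemma coef_acorr_high (s : seq int) l j : size s = l.+1 -> (acorr s)`_(l + j) = naf s j.
Proof.
move=> sz; pose F k := (Poly s)`_(l + j - k) * (Poly (rev s))`_k.
rewrite coefMr (@sum_ord_cut _ F _ l.+1); first last.
- by move=> k /andP[le_k _]; rewrite /F !coef_Poly [X in _ * X]nth_default ?mulr0 ?size_rev ?sz.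
- lia.
pose G k := F (l - k)%N.
rewrite (reindex_inj rev_ord_inj) /= /naf big_mkord sz (@sum_ord_cut _ G _ (l.+1 - j)).
- apply: eq_bigr => -[k lt_k] _ /=.
  rewrite /G /F !coef_Poly nth_rev; last by size_lia s.
  by rewrite mulrC; congr (s`_ _ * s`_ _); size_lia s.
- lia.
- move=> k /andP[le_k lt_k].
  by rewrite /G /F !coef_Poly [X in X * _]nth_default ?mul0r //; size_lia s.
Qed.

Lemma coef_X_acorr_low (s : seq int) l j : size s = l -> (j <= l)%N ->
  ('X * acorr s)`_(l - j) = naf s j.
Proof.
move=> sz le_j; rewrite coefXM.
case: eqP => [lj0 | /eqP lj_neq0]; first by rewrite naf_eq0 // sz; lia.
have [l' sz'] : exists l', size s = l'.+1 by exists l.-1; lia.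
have -> : ((l - j).-1 = l' - j)%N by lia.
by rewrite (coef_acorr_low sz') //; lia.
Qed.

Lemma coef_X_acorr_high (s : seq int) l j : size s = l -> ('X * acorr s)`_(l + j) = naf s j.
Proof.
move=> sz; rewrite coefXM.
case: l sz => [/size0nil -> | l sz]; first by rewrite /acorr mul0r coef0 if_same naf_eq0.
by rewrite addSn (coef_acorr_high _ sz).
Qed.

Lemma base_seqs_norm m (a b c d : seq int) : is_base_seqs m.+1 m a b c d ->
  acorr a + acorr b + 'X * (acorr c + acorr d) = (4 * m + 2)%:R%:P * 'X^m.
Proof.
case=> -[sa pa] [sb pb] [sc pc] [sd pd] naf_sum0.
pose N j := naf a j + naf b j + naf c j + naf d j.
have N0 : N 0 = (4 * m + 2)%:R by rewrite /N !naf0 // sa sb sc sd -!natrD; congr _%:R; lia.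
have coef_low j : (j <= m)%N -> (acorr a + acorr b + 'X * (acorr c + acorr d))`_(m - j) = N j.
  move=> le_j; rewrite mulrDr !coefD !(coef_acorr_low sa, coef_acorr_low sb) //.
  by rewrite !(coef_X_acorr_low sc, coef_X_acorr_low sd) // !addrA.
have coef_high j : (acorr a + acorr b + 'X * (acorr c + acorr d))`_(m + j) = N j.
  rewrite mulrDr !coefD !(coef_acorr_high _ sa, coef_acorr_high _ sb).
  by rewrite !(coef_X_acorr_high _ sc, coef_X_acorr_high _ sd) !addrA.
apply/polyP => i; rewrite coefCM coefXn.
have [le_im | lt_mi] := leqP i m.
  rewrite -(subKn le_im) coef_low ?leq_subr //.
  have [-> | pos] := posnP (m - i); first by rewrite subn0 eqxx mulr1.
  by rewrite /N naf_sum0 // (_ : _ == m = false) ?mulr0 //; apply/eqP; lia.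
rewrite -(subnKC (ltnW lt_mi)) coef_high /N naf_sum0 ?subn_gt0 //.
by rewrite (_ : _ == m = false) ?mulr0 //; apply/eqP; lia.
Qed.

Lemma naf_sum_eq0 N L (s : nat -> seq int) (c : int) :
    (forall k, size (s k) = L) -> \sum_(k < N) acorr (s k) = c%:P * 'X^(L.-1) ->
  forall j, (0 < j)%N -> \sum_(k < N) naf (s k) j = 0.
Proof.
move=> sz acorr_sum j j_gt0.
have [lt_jL | le_Lj] := ltnP j L; last by rewrite big1 // => k _; rewrite naf_eq0 ?sz.
case: L sz acorr_sum lt_jL => // L sz acorr_sum lt_jL.
have coefE : (\sum_(k < N) acorr (s k))`_(L - j) = \sum_(k < N) naf (s k) j.
  by rewrite coef_sum; apply: eq_bigr => k _; rewrite (coef_acorr_low (sz k)).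
by rewrite -coefE acorr_sum coefCM coefXn (_ : _ == L = false) ?mulr0 //; apply/eqP; lia.
Qed.

Definition spread (s : seq int) (b : bool) : {poly int} := 'X^b * (Poly s \Po 'X^2).

Lemma coef_spread s b r : (spread s b)`_r = if odd r == b then s`_r./2 else 0.
Proof.
rewrite coefXnM coef_comp_poly_Xn // coef_Poly dvdn2 divn2.
case: b => /=; last by rewrite subn0; case: (odd r).
by case: r => //= r; rewrite subn1 /= uphalf_half; case: (odd r).
Qed.

Section Spread.
Variables (l : nat) (s : seq int) (b : bool).
Hypothesis size_s : size s = (if b then l else l.+1).

Lemma size_spread : (size (spread s b) <= (2 * l).+1)%N.
Proof.
apply/leq_sizeP => r le_r; rewrite coef_spread; case: eqP => // odd_r.
rewrite nth_default // size_s.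
have := odd_double_half r; rewrite odd_r -addnn.
by case: (b) odd_r => odd_r /=; lia.
Qed.

Lemma coef_spread_rev r : (r <= 2 * l)%N -> (spread (rev s) b)`_r = (spread s b)`_(2 * l - r).
Proof.
move=> le_r; rewrite !coef_spread oddB // oddM /=.
case: eqP => // odd_r.
have [t rE] : exists t, r = (b + t.*2)%N by exists r./2; rewrite -odd_r odd_double_half.
have -> : (2 * l - r = b + (l - t - b).*2)%N.
  by rewrite -!muln2; case: (b) size_s rE le_r => _ -> /=; lia.
rewrite rE !half_bit_double nth_rev; last by case: (b) size_s rE le_r => -> -> /=; lia.
by congr s`_ _; case: (b) size_s rE le_r => -> -> /=; lia.
Qed.

Lemma pm1_coef_spread r : all pm1 s -> (r <= 2 * l)%N -> odd r = b -> pm1 (spread s b)`_r.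
Proof.
move=> /allP s_pm1 le_r odd_r; rewrite coef_spread odd_r eqxx; apply/s_pm1/mem_nth.
have := odd_double_half r; rewrite odd_r -addnn.
by case: (b) size_s odd_r => -> odd_r /=; lia.
Qed.

End Spread.

(* The primed vectors play the role of conjugates (reversals, in the application), which
   makes [four_square_norm] a Hermitian version of Euler's four-square identity. *)
Definition four_square (R : nzRingType) (x x' y y' : nat -> R) (k : nat) : R :=
  match k with
  | 0%N => x 0%N * y 0%N - x' 1%N * y 2%N - x' 2%N * y 1%N - x 3%N * y' 3%N
  | 1%N => x 1%N * y 0%N + x' 0%N * y 2%N - x' 2%N * y 3%N + x 3%N * y' 1%N
  | 2%N => x 2%N * y 0%N - x 3%N * y' 2%N + x' 0%N * y 1%N + x' 1%N * y 3%N
  | _ => x 2%N * y 2%N + x 3%N * y' 0%N - x 1%N * y 1%N + x 0%N * y 3%N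
  end.

Lemma four_square_norm (R : comNzRingType) (x x' y y' : nat -> R) :
  \sum_(k < 4) four_square x x' y y' k * four_square x' x y' y k =
  (\sum_(i < 4) x i * x' i) * (\sum_(i < 4) y i * y' i).
Proof. by rewrite !big_ord_recr !big_ord0 /=; ring. Qed.

Lemma eq_four_square (R : nzRingType) (x1 x1' y1 y1' x2 x2' y2 y2' : nat -> R) k :
  {in gtn 4, x1 =1 x2} -> {in gtn 4, x1' =1 x2'} ->
  {in gtn 4, y1 =1 y2} -> {in gtn 4, y1' =1 y2'} ->
  four_square x1 x1' y1 y1' k = four_square x2 x2' y2 y2' k.
Proof. by move=> ex ex' ey ey'; case: k => [|[|[|k]]] /=; rewrite !(ex, ex', ey, ey'). Qed.

Lemma four_square_eq0 (R : nzRingType) (x x' y y' : nat -> R) k :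
  {in gtn 4, y =1 fun=> 0} -> {in gtn 4, y' =1 fun=> 0} -> four_square x x' y y' k = 0.
Proof. by move=> y0 y0'; case: k => [|[|[|k]]] /=; rewrite !(y0, y0') // !mulr0 !subr0 ?addr0. Qed.

Definition pm1_slots (p : bool) (x : nat -> int) : Prop :=
  {in gtn 4, forall i, if (1 < i)%N == p then pm1 (x i) else x i == 0}.

Lemma four_square_pm1 (x x' y y' : nat -> int) (p q : bool) k :
  pm1_slots p x -> pm1_slots p x' -> pm1_slots q y -> pm1_slots q y' ->
  pm1 (four_square x x' y y' k).
Proof.
move=> hx hx' hy hy'.
move: (hx 0%N isT) (hx 1%N isT) (hx 2%N isT) (hx 3%N isT).
move: (hx' 0%N isT) (hx' 1%N isT) (hx' 2%N isT) (hx' 3%N isT).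
move: (hy 0%N isT) (hy 1%N isT) (hy 2%N isT) (hy 3%N isT).
move: (hy' 0%N isT) (hy' 1%N isT) (hy' 2%N isT) (hy' 3%N isT).
clear hx hx' hy hy'.
case: p; case: q; case: k => [|[|[|k]]] /=; do 16 (move=> /eqP-> || move=> ?);
  rewrite ?(mul0r, mulr0, subr0, sub0r, addr0, add0r);
  by repeat (apply: pm1N || apply: pm1M).
Qed.

Lemma coef_mul_comp_Xn (R : comNzRingType) K (p q : {poly R}) r k :
  (size p <= K)%N -> (r < K)%N -> (p * (q \Po 'X^K))`_(r + k * K) = p`_r * q`_k.
Proof.
move=> le_pK lt_rK; elim/poly_ind: q k => [|q c IHq] k.
  by rewrite comp_poly0 mulr0 !coef0 mulr0.
rewrite comp_polyD comp_polyM comp_polyX comp_polyC mulrDr coefD mulrA coefMXn coefMC.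
rewrite coefD coefMX coefC.
case: k => [|k]; first by rewrite mul0n addn0 lt_rK /= !add0r.
rewrite mulSn ifN; last by rewrite -leqNgt; lia.
rewrite (nth_default _ (leq_trans le_pK _)); last by lia.
by rewrite (_ : _ - K = r + k * K)%N; [rewrite IHq /= mul0r !addr0 | lia].
Qed.

Lemma coef_four_square_comp (R : comNzRingType) K (x x' y y' : nat -> {poly R}) k r q :
  {in gtn 4, forall i, size (x i) <= K /\ size (x' i) <= K}%N -> (r < K)%N ->
  (four_square x x' (fun i => y i \Po 'X^K) (fun i => y' i \Po 'X^K) k)`_(r + q * K) =
  four_square (fun i => (x i)`_r) (fun i => (x' i)`_r) (fun i => (y i)`_q) (fun i => (y' i)`_q) k.
Proof.
move=> size_x lt_rK.
move: (size_x 0%N isT) (size_x 1%N isT) (size_x 2%N isT) (size_x 3%N isT).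
case=> ? ? [? ?] [? ?] [? ?].
by case: k => [|[|[|k]]] /=; rewrite !(coefD, coefN) !coef_mul_comp_Xn.
Qed.

Lemma kron_indexP K (P : nat -> Prop) : (0 < K)%N ->
  (forall r q, (r < K)%N -> P (r + q * K)%N) -> forall i, P i.
Proof. by move=> K_gt0 PK i; rewrite (divn_eq i K) addnC; apply/PK/ltn_pmod. Qed.

Lemma Poly_mkseq_nth (R : nzSemiRingType) (p : {poly R}) L :
  (size p <= L)%N -> Poly (mkseq (nth 0 p) L) = p.
Proof.
move=> le_pL; apply/polyP => i; rewrite coef_Poly.
have [lt_iL | le_Li] := ltnP i L; first by rewrite nth_mkseq.
by rewrite !nth_default ?size_mkseq // (leq_trans le_pL).
Qed.

Lemma Poly_rev_mkseq_nth (R : nzSemiRingType) (p q : {poly R}) L :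
  (size q <= L)%N -> {in gtn L, forall i, q`_i = p`_(L.-1 - i)} ->
  Poly (rev (mkseq (nth 0 p) L)) = q.
Proof.
move=> le_qL q_rev; apply/polyP => i; rewrite coef_Poly.
have [lt_iL | le_Li] := ltnP i L.
  by rewrite q_rev // nth_rev size_mkseq // nth_mkseq; [congr p`_ _|]; lia.
by rewrite !nth_default ?size_rev ?size_mkseq // (leq_trans le_qL).
Qed.

Definition spread_quad (w : nat -> seq int) (i : nat) : {poly int} := spread (w i) (1 < i)%N.

Lemma spread_quad_norm (w : nat -> seq int) :
  \sum_(i < 4) spread_quad w i * spread_quad (rev \o w) i =
  (acorr (w 0%N) + acorr (w 1%N) + 'X * (acorr (w 2%N) + acorr (w 3%N))) \Po 'X^2.
Proof.
rewrite !big_ord_recr big_ord0 /= /spread_quad /spread /acorr /=.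
by rewrite !comp_polyD !comp_polyM comp_polyX; ring.
Qed.

Definition pm1_quad (l : nat) (w : nat -> seq int) : Prop :=
  {in gtn 4, forall i, size (w i) = (if (1 < i)%N then l else l.+1) /\ all pm1 (w i)}.

Lemma base_seqs_pm1_quad l (w : nat -> seq int) :
  is_base_seqs l.+1 l (w 0%N) (w 1%N) (w 2%N) (w 3%N) -> pm1_quad l w.
Proof. by case=> -[? ?] [? ?] [? ?] [? ?] _; case=> [|[|[|[|i]]]]. Qed.

Lemma pm1_quad_rev l (w : nat -> seq int) : pm1_quad l w -> pm1_quad l (rev \o w).
Proof. by move=> wq i /wq[sz w_pm1]; rewrite /= size_rev all_rev. Qed.

Section SpreadQuad.
Variables (l : nat) (w : nat -> seq int).
Hypothesis w_quad : pm1_quad l w.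

Lemma size_spread_quad : {in gtn 4, forall i, size (spread_quad w i) <= (2 * l).+1}%N.
Proof. by move=> i /w_quad[sz _]; apply: size_spread. Qed.

Lemma coef_spread_quad_rev i r : (i < 4)%N -> (r <= 2 * l)%N ->
  (spread_quad (rev \o w) i)`_r = (spread_quad w i)`_(2 * l - r).
Proof. by move=> /w_quad[sz _]; apply: coef_spread_rev. Qed.

Lemma pm1_slots_spread_quad r : (r <= 2 * l)%N -> pm1_slots (odd r) (fun i => (spread_quad w i)`_r).
Proof.
move=> le_r i /w_quad[sz w_pm1] /=; rewrite /spread_quad.
case: eqP => [odd_r | /eqP odd_r]; first by apply: (pm1_coef_spread sz).
by rewrite coef_spread (eq_sym (odd r)) (negbTE odd_r).
Qed.

End SpreadQuad.

Definition bs_prod (K : nat) (u u' v v' : nat -> seq int) : nat -> {poly int} :=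
  four_square (spread_quad u) (spread_quad u')
    (fun i => spread_quad v i \Po 'X^K) (fun i => spread_quad v' i \Po 'X^K).

Section BaseSeqsProduct.
Variables (m n : nat).
Local Notation K := (2 * m).+1.
Local Notation L := (K * (2 * n).+1)%N.

Lemma size_bs_prod u u' v v' k : pm1_quad m u -> pm1_quad m u' -> pm1_quad n v -> pm1_quad n v' ->
  (size (bs_prod K u u' v v' k) <= L)%N.
Proof.
move=> uq u'q vq v'q; apply/leq_sizeP; apply: (kron_indexP (ltn0Sn (2 * m))) => r q lt_rK le_L.
rewrite /bs_prod coef_four_square_comp //; last by move=> i lt_i4; rewrite !size_spread_quad.
have lt_nq : (2 * n < q)%N by nia.
by apply: four_square_eq0 => i lt_i4 /=; rewrite nth_default //;
  apply: leq_trans lt_nq; apply: size_spread_quad.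
Qed.

Lemma pm1_coef_bs_prod u u' v v' k i :
  pm1_quad m u -> pm1_quad m u' -> pm1_quad n v -> pm1_quad n v' ->
  (i < L)%N -> pm1 (bs_prod K u u' v v' k)`_i.
Proof.
move=> uq u'q vq v'q; move: i; apply: (kron_indexP (ltn0Sn (2 * m))) => r q lt_rK lt_L.
rewrite /bs_prod coef_four_square_comp //; last by move=> i lt_i4; rewrite !size_spread_quad.
have le_r : (r <= 2 * m)%N by lia.
have le_q : (q <= 2 * n)%N by nia.
exact: four_square_pm1 (pm1_slots_spread_quad uq le_r) (pm1_slots_spread_quad u'q le_r)
  (pm1_slots_spread_quad vq le_q) (pm1_slots_spread_quad v'q le_q).
Qed.

Lemma kron_index_rev r q : (r <= 2 * m)%N -> (q <= 2 * n)%N ->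
  (L.-1 - (r + q * K) = (2 * m - r) + (2 * n - q) * K)%N.
Proof. by move=> le_r le_q; nia. Qed.

Lemma coef_bs_prod_rev u v k : pm1_quad m u -> pm1_quad n v ->
  forall i, (i < L)%N -> (bs_prod K (rev \o u) u (rev \o v) v k)`_i =
                         (bs_prod K u (rev \o u) v (rev \o v) k)`_(L.-1 - i).
Proof.
move=> uq vq; have u'q := pm1_quad_rev uq; have v'q := pm1_quad_rev vq.
apply: (kron_indexP (ltn0Sn (2 * m))) => r q lt_rK lt_L.
have le_r : (r <= 2 * m)%N by lia.
have le_q : (q <= 2 * n)%N by nia.
rewrite kron_index_rev // /bs_prod !coef_four_square_comp //; first last.
- by move=> i lt_i4; rewrite !size_spread_quad.
- by rewrite ltnS leq_subr.
- by move=> i lt_i4; rewrite !size_spread_quad.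
by apply: eq_four_square => i lt_i4 /=;
  rewrite ?(coef_spread_quad_rev uq, coef_spread_quad_rev vq) ?subKn ?leq_subr.
Qed.

Lemma bs_prod_norm u v :
  is_base_seqs m.+1 m (u 0%N) (u 1%N) (u 2%N) (u 3%N) ->
  is_base_seqs n.+1 n (v 0%N) (v 1%N) (v 2%N) (v 3%N) ->
  \sum_(k < 4) bs_prod K u (rev \o u) v (rev \o v) k * bs_prod K (rev \o u) u (rev \o v) v k =
  ((4 * m + 2) * (4 * n + 2))%:R%:P * 'X^(L.-1).
Proof.
move=> bu bv; rewrite four_square_norm spread_quad_norm (base_seqs_norm bu).
have -> : \sum_(i < 4) (spread_quad v i \Po 'X^K) * (spread_quad (rev \o v) i \Po 'X^K) =
          (\sum_(i < 4) spread_quad v i * spread_quad (rev \o v) i) \Po 'X^K.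
  by rewrite !big_ord_recr !big_ord0 /= !add0r !comp_polyD !comp_polyM.
rewrite spread_quad_norm (base_seqs_norm bv) !comp_polyM !comp_polyC !comp_Xn_poly -!exprM.
rewrite comp_Xn_poly -exprM (_ : L.-1 = 2 * m + K * (2 * n))%N; last by nia.
by rewrite exprD natrM polyCM; ring.
Qed.

Lemma BS_nonempty_bs_prod u v :
  is_base_seqs m.+1 m (u 0%N) (u 1%N) (u 2%N) (u 3%N) ->
  is_base_seqs n.+1 n (v 0%N) (v 1%N) (v 2%N) (v 3%N) -> BS_nonempty L L.
Proof.
move=> bu bv; have uq := base_seqs_pm1_quad bu; have vq := base_seqs_pm1_quad bv.
have u'q := pm1_quad_rev uq; have v'q := pm1_quad_rev vq.
pose P := bs_prod K u (rev \o u) v (rev \o v); pose P' := bs_prod K (rev \o u) u (rev \o v) v.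
pose S k := mkseq (nth 0 (P k)) L.
have acorrS k : acorr (S k) = P k * P' k.
  rewrite /acorr Poly_mkseq_nth ?size_bs_prod // (@Poly_rev_mkseq_nth _ _ (P' k)) ?size_bs_prod //.
  exact: coef_bs_prod_rev.
have sizeS k : size (S k) = L := size_mkseq _ _.
have pm1S k : pm1_seq L (S k).
  split=> //; apply/allP => x /mapP[i]; rewrite mem_iota => /andP[_ lt_iL] ->.
  exact: pm1_coef_bs_prod.
exists (S 0%N), (S 1%N), (S 2%N), (S 3%N); split; try exact: pm1S.
have acorr_sum : \sum_(k < 4) acorr (S k) = ((4 * m + 2) * (4 * n + 2))%:R%:P * 'X^(L.-1).
  by under eq_bigr do rewrite acorrS; exact: bs_prod_norm.
move=> j /(naf_sum_eq0 sizeS acorr_sum).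
by rewrite !big_ord_recr big_ord0 /= add0r.
Qed.

End BaseSeqsProduct.

Theorem theorem1p1 (m n : nat) :
  (0 < m)%N -> (0 < n)%N ->
  BS_nonempty m.+1 m -> BS_nonempty n.+1 n ->
  BS_nonempty ((2 * m + 1) * (2 * n + 1))%N ((2 * m + 1) * (2 * n + 1))%N.
Proof.
move=> _ _ [a [b [c [d bs_m]]]] [e [f [g [h bs_n]]]]; rewrite !addn1.
exact: (@BS_nonempty_bs_prod m n (nth [::] [:: a; b; c; d]) (nth [::] [:: e; f; g; h])).
Qed.
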